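(* Let $n_{\mathrm w},m\in\mathbb{N}$, let $\gamma:\mathbb{R}^{n_{\mathrm w}}\to\mathbb{R}$ be a convex piecewise quadratic function, and let $\bar A\in\mathbb{R}^{m}$, $\bar B\in\mathbb{R}^{m\times n_{\mathrm w}}$, $\bar C\in\mathbb{R}^{m}$. Let $N\ge 1$ and $Z_0<Z_1<\dots<Z_N$ be real numbers, and let $\varphi:\mathbb{R}\to\mathbb{R}$ be a convex piecewise quadratic function on $[Z_0,Z_N]$ of the form $$\varphi(z)=\tfrac12 h_r z^2+f_r z+g_r\quad \text{if } z\in[Z_{r-1},Z_r],\ r\in\{1,\dots,N\},$$ with $h_r,f_r,g_r\in\mathbb{R}$ such that for every $r\in\{1,\dots,N-1\}$: $h_r>0$ or $[f_r\ g_r]\neq[f_{r+1}\ g_{r+1}]$. Consider the optimization problem $$\min_{w,y_1,\dots,y_N}\ \gamma(w)+\varphi(Z_0)+\sum_{r=1}^N\big[\varphi(y_r)-\varphi(Z_{r-1})\big]$$ subject to $Z_{r-1}\le y_r\le Z_r$ for $r=1,\dots,N$, and $\bar A\big[Z_0+\sum_{r=1}^N (y_r-Z_{r-1})\big]+\bar B w\le \bar C$. Let $w^*,y_1^*,\dots,y_N^*$ be an optimizer of this problem. Then: (i) for every $r\in\{2,\dots,N\}$, if $y_r^*>Z_{r-1}$ then $y_s^*=Z_s$ for all $s=1,\dots,r-1$; (ii) for every $r\in\{1,\dots,N-1\}$, if $y_r^*=Z_{r-1}$ then $y_s^*=Z_{s-1}$ for all $s=r+1,\dots,N$; (iii) with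 $z^*:=Z_0+\sum_{r=1}^N (y_r^*-Z_{r-1})$, the pair $(w^*,z^* )$ is an optimizer of the problem $$\min_{w,z}\ \gamma(w)+\varphi(z)\quad\text{s.t.}\quad Z_0\le z\le Z_N,\quad \bar A z+\bar B w\le \bar C.$$ *)

From HB Require Import structures.
From mathcomp Require Import all_boot all_order all_algebra.
From mathcomp Require Import reals.
Set Implicit Arguments. Unset Strict Implicit. Unset Printing Implicit Defensive.
Import Order.TTheory GRing.Theory Num.Theory.
Local Open Scope ring_scope.

Section Defs.
Variable R : realType.

Definition convex_fun (n : nat) (f : 'cV[R]_n -> R) : Prop :=
  forall (x y : 'cV[R]_n) (t : R), 0 <= t -> t <= 1 ->
    f (t *: x + (1 - t) *: y) <= t * f x + (1 - t) * f y.

Definition convex_on (a b : R) (f : R -> R) : Prop :=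
  forall x y t : R, a <= x -> x <= b -> a <= y -> y <= b -> 0 <= t -> t <= 1 ->
    f (t * x + (1 - t) * y) <= t * f x + (1 - t) * f y.

Definition piecewise_quadratic (n : nat) (f : 'cV[R]_n -> R) : Prop :=
  exists (K p : nat) (G : 'I_K -> 'M[R]_(p, n)) (k : 'I_K -> 'cV[R]_p)
         (Q : 'I_K -> 'M[R]_n) (c : 'I_K -> 'cV[R]_n) (d : 'I_K -> R),
    (forall x : 'cV[R]_n, exists i : 'I_K, forall j : 'I_p, (G i *m x) j 0 <= k i j 0) /\
    (forall (i : 'I_K) (x : 'cV[R]_n), (forall j : 'I_p, (G i *m x) j 0 <= k i j 0) ->
       f x = 2^-1 * (x^T *m (Q i) *m x) 0 0 + ((c i)^T *m x) 0 0 + d i).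

Definition lin_con (m nw : nat) (Abar : 'cV[R]_m) (Bbar : 'M[R]_(m, nw))
  (Cbar : 'cV[R]_m) (z : R) (w : 'cV[R]_nw) : Prop :=
  forall i : 'I_m, Abar i 0 * z + (Bbar *m w) i 0 <= Cbar i 0.

Definition zsum (N : nat) (Z y : nat -> R) : R :=
  Z 0%N + \sum_(1 <= r < N.+1) (y r - Z r.-1).

Definition feas1 (m nw N : nat) (Abar : 'cV[R]_m) (Bbar : 'M[R]_(m, nw))
  (Cbar : 'cV[R]_m) (Z : nat -> R) (w : 'cV[R]_nw) (y : nat -> R) : Prop :=
  (forall r, (1 <= r <= N)%N -> Z r.-1 <= y r /\ y r <= Z r) /\
  lin_con Abar Bbar Cbar (zsum N Z y) w.

Definition obj1 (nw N : nat) (gamma : 'cV[R]_nw -> R) (phi : R -> R)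
  (Z : nat -> R) (w : 'cV[R]_nw) (y : nat -> R) : R :=
  gamma w + phi (Z 0%N) + \sum_(1 <= r < N.+1) (phi (y r) - phi (Z r.-1)).

Definition feas2 (m nw N : nat) (Abar : 'cV[R]_m) (Bbar : 'M[R]_(m, nw))
  (Cbar : 'cV[R]_m) (Z : nat -> R) (w : 'cV[R]_nw) (z : R) : Prop :=
  Z 0%N <= z /\ z <= Z N /\ lin_con Abar Bbar Cbar z w.

End Defs.

(* If an optimal lifted point had a piece s that is not full while a later
   piece r is started, moving a small amount d from y_r to y_s keeps z, hence
   feasibility, and optimality says that the chord of phi over [y_r - d, y_r]
   is no steeper than the chord over [y_s, y_s + d].  Convexity gives the
   reverse inequality, so all chords in between have the same slope: phi is
   affine with the same coefficients on both sides of the breakpoint Z_s,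
   which the assumption on (h, f, g) forbids.  Hence optimal points fill the
   pieces from left to right; such a point is determined by z, its lifted
   objective is gamma w + phi z, and every feasible z lifts the same way. *)

From HB Require Import structures.
From mathcomp Require Import all_boot all_order all_algebra.
From mathcomp Require Import reals.
From mathcomp Require Import ring lra zify.
Set Implicit Arguments. Unset Strict Implicit. Unset Printing Implicit Defensive.
Import Order.TTheory GRing.Theory Num.Theory.
Local Open Scope ring_scope.

Section ChordSlope.
Variable R : realType.
Implicit Types (phi : R -> R) (x y z : R).

Definition chord_slope phi x y := (phi y - phi x) / (y - x).

Lemma chord_slope_quadratic phi h f g x y : x < y ->
  (forall z, x <= z -> z <= y -> phi z = 2^-1 * h * z ^+ 2 + f * z + g) ->
  chord_slope phi x y = 2^-1 * h * (x + y) + f.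
Proof.
move=> xy quad; rewrite /chord_slope !quad ?lexx ?ltW //.
by field; rewrite subr_eq0 gt_eqF.
Qed.

Lemma quadratic_coef_eq0 phi h f g x y x1 y1 x2 y2 :
  x <= x1 -> x1 < y1 -> y1 <= y -> x <= x2 -> x2 < y2 -> y2 <= y ->
  (forall z, x <= z -> z <= y -> phi z = 2^-1 * h * z ^+ 2 + f * z + g) ->
  chord_slope phi x1 y1 = chord_slope phi x2 y2 -> x1 + y1 != x2 + y2 -> h = 0.
Proof.
move=> xx1 x1y1 y1y xx2 x2y2 y2y quad.
have quad_on u v : x <= u -> v <= y ->
    forall z, u <= z -> z <= v -> phi z = 2^-1 * h * z ^+ 2 + f * z + g.
  by move=> xu vy z uz zv; apply: quad; lra.
rewrite (chord_slope_quadratic x1y1 (quad_on _ _ xx1 y1y)).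
rewrite (chord_slope_quadratic x2y2 (quad_on _ _ xx2 y2y)) => E ne.
have /eqP : h * (x1 + y1 - (x2 + y2)) = 0 by lra.
by rewrite mulf_eq0 subr_eq0 (negbTE ne) orbF => /eqP.
Qed.

Section Convex.
Variables (phi : R -> R) (a b : R).
Hypothesis phi_convex : convex_on a b phi.

Lemma convex_on_three_points x y z : a <= x -> x < y -> y < z -> z <= b ->
  phi y * (z - x) <= (z - y) * phi x + (y - x) * phi z.
Proof.
move=> ax xy yz zb.
have zx_gt0 : 0 < z - x by lra.
pose t := (z - y) / (z - x).
have t_ge0 : 0 <= t by rewrite divr_ge0 //; lra.
have t_le1 : t <= 1 by rewrite ler_pdivrMr // mul1r; lra.
have y_comb : t * x + (1 - t) * z = y by rewrite /t; field; rewrite gt_eqF.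
have xb : x <= b by lra.
have az : a <= z by lra.
have := phi_convex ax xb az zb t_ge0 t_le1.
rewrite y_comb -(ler_pM2r zx_gt0) => /le_trans; apply.
by rewrite le_eqVlt; apply/orP; left; apply/eqP; rewrite /t; field; rewrite gt_eqF.
Qed.

Lemma chord_slope_le_right x y z : a <= x -> x < y -> y < z -> z <= b ->
  chord_slope phi x y <= chord_slope phi x z.
Proof.
move=> ax xy yz zb; have := convex_on_three_points ax xy yz zb.
have [yx_gt0 zx_gt0 zy_gt0] : [/\ 0 < y - x, 0 < z - x & 0 < z - y] by split; lra.
by rewrite /chord_slope ler_pdivrMr // mulrAC ler_pdivlMr //; nra.
Qed.

Lemma chord_slope_le_left x y z : a <= x -> x < y -> y < z -> z <= b ->
  chord_slope phi x z <= chord_slope phi y z.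
Proof.
move=> ax xy yz zb; have := convex_on_three_points ax xy yz zb.
have [yx_gt0 zx_gt0 zy_gt0] : [/\ 0 < y - x, 0 < z - x & 0 < z - y] by split; lra.
by rewrite /chord_slope ler_pdivrMr // mulrAC ler_pdivlMr //; nra.
Qed.

Lemma chord_slope_le x1 y1 x2 y2 : a <= x1 -> x1 < y1 -> x2 < y2 ->
  x1 <= x2 -> y1 <= y2 -> y2 <= b ->
  chord_slope phi x1 y1 <= chord_slope phi x2 y2.
Proof.
move=> ax1 x1y1 x2y2 x1x2 y1y2 y2b.
apply: (@le_trans _ _ (chord_slope phi x1 y2)).
  case: (ltrP y1 y2) => [y1y2'|y2y1]; first exact: chord_slope_le_right.
  by rewrite (@le_anti _ _ y1 y2) ?y1y2.
case: (ltrP x1 x2) => [x1x2'|x2x1]; first by apply: chord_slope_le_left; lra.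
by rewrite (@le_anti _ _ x1 x2) ?x1x2.
Qed.

Lemma chord_slope_squeeze x d y x' y' : a <= x -> 0 < d -> x + d <= y -> y + d <= b ->
  chord_slope phi y (y + d) <= chord_slope phi x (x + d) ->
  x' < y' -> x <= x' <= y -> x + d <= y' <= y + d ->
  chord_slope phi x' y' = chord_slope phi x (x + d).
Proof.
move=> ax d_gt0 xdy ydb slope_le x'y' /andP[xx' x'y] /andP[xdy' y'yd].
apply/le_anti/andP; split.
  apply: le_trans slope_le; apply: chord_slope_le => //; lra.
apply: chord_slope_le => //; lra.
Qed.

End Convex.
End ChordSlope.

Section Breakpoints.
Variables (R : realType) (N : nat) (Z : nat -> R).
Hypothesis Z_step : forall r, (r < N)%N -> Z r < Z r.+1.

Lemma Z_lt i j : (i < j)%N -> (j <= N)%N -> Z i < Z j.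
Proof.
move=> ij jN.
apply: (@homo_ltn_in _ [pred k | (k <= N)%N] Z (fun u v => u < v)) => //=.
- by move=> ? ? ?; apply: lt_trans.
- by move=> ? ? _ jN' k /andP[_ kj]; rewrite inE (leq_trans (ltnW kj) jN').
- by move=> k _; rewrite inE; apply: Z_step.
- by rewrite inE (ltnW (leq_trans ij jN)).
Qed.

Lemma Z_le i j : (i <= j)%N -> (j <= N)%N -> Z i <= Z j.
Proof.
by rewrite leq_eqVlt => /predU1P[->|ij] jN; [exact: lexx | exact/ltW/Z_lt].
Qed.

Variables (phi : R -> R) (h f g : nat -> R).
Hypothesis phi_convex : convex_on (Z 0%N) (Z N) phi.
Hypothesis phi_pieces : forall r z, (1 <= r <= N)%N -> Z r.-1 <= z -> z <= Z r ->
  phi z = 2^-1 * h r * z ^+ 2 + f r * z + g r.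

(* Halving a chord inside one piece changes its slope by h/4 times its length,
   so equal slopes detect h = 0. *)
Lemma affine_across_breakpoint (s : nat) (x y d : R) :
  (1 <= s < N)%N -> 0 < d -> Z s.-1 <= x -> x + d <= Z s -> Z s <= y ->
  Z s < y + d -> y + d <= Z N ->
  chord_slope phi y (y + d) <= chord_slope phi x (x + d) ->
  h s = 0 /\ h s.+1 = 0 /\ (f s, g s) = (f s.+1, g s.+1).
Proof.
move=> /andP[s_ge1 sN] d_gt0 Zx xdZ Zy Zyd ydN slope_le.
have s_piece : (1 <= s <= N)%N by rewrite s_ge1 ltnW.
have Z0x : Z 0%N <= x by apply: le_trans Zx; apply: Z_le => //; lia.
have squeeze x' y' := chord_slope_squeeze phi_convex Z0x d_gt0 (le_trans xdZ Zy) ydN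
  slope_le (x' := x') (y' := y').
pose e := Num.min (Z s.+1) (y + d).
have Zs_e : Z s < e by rewrite lt_min Z_step.
have e_le : e <= Z s.+1 /\ e <= y + d by rewrite !ge_min !lexx orbT.
have piece_s z : x <= z -> z <= x + d ->
    phi z = 2^-1 * h s * z ^+ 2 + f s * z + g s.
  by move=> xz zxd; apply: phi_pieces => //; lra.
have piece_s1 z : Z s <= z -> z <= e ->
    phi z = 2^-1 * h s.+1 * z ^+ 2 + f s.+1 * z + g s.+1.
  by move=> Zz ze; apply: phi_pieces => //; lra.
have hs0 : h s = 0.
  apply: (@quadratic_coef_eq0 _ phi _ _ _ x (x + d) (x + d / 2) (x + d) x (x + d)
            _ _ _ _ _ _ piece_s);
    [lra.. | by rewrite squeeze //; lra | by rewrite gt_eqF //; lra].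
have hs10 : h s.+1 = 0.
  apply: (@quadratic_coef_eq0 _ phi _ _ _ (Z s) e (Z s) ((Z s + e) / 2) (Z s) e
            _ _ _ _ _ _ piece_s1);
    [lra.. | by rewrite !squeeze //; lra | by rewrite lt_eqF //; lra].
have xxd : x < x + d by rewrite ltrDl.
have slope_s : chord_slope phi x (x + d) = f s.
  by rewrite (chord_slope_quadratic xxd piece_s) hs0; lra.
have slope_s1 : chord_slope phi (Z s) e = f s.+1.
  by rewrite (chord_slope_quadratic Zs_e piece_s1) hs10; lra.
have fs : f s = f s.+1 by rewrite -slope_s -slope_s1 squeeze //; lra.
have phi_Zs : phi (Z s) = f s * Z s + g s.
  by rewrite (phi_pieces (r := s)) ?hs0 ?lexx ?(Z_le (leq_pred s) (ltnW sN)) //; lra.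
have phi_Zs' : phi (Z s) = f s.+1 * Z s + g s.+1.
  by rewrite piece_s1 ?hs10 ?lexx //; [lra | exact: ltW].
have gs : g s = g s.+1 by apply: (addrI (f s * Z s)); rewrite -phi_Zs phi_Zs' fs.
by rewrite fs gs.
Qed.

End Breakpoints.

Section Profiles.
Variable R : realType.
Implicit Types (Z y : nat -> R) (F : R -> R).

(* The lifted point of z = v when v lies in the k-th piece. *)
Definition fill Z k v t : R :=
  if (t < k)%N then Z t else if t == k then v else Z t.-1.

Lemma sum_fill F Z k v n : (0 < k)%N ->
  \sum_(1 <= t < n.+1) (F (fill Z k v t) - F (Z t.-1)) =
  F (if (n < k)%N then Z n else v) - F (Z 0%N).
Proof.
move=> k_gt0; elim: n => [|n IHn]; first by rewrite big_geq // k_gt0 subrr.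
rewrite big_nat_recr //= IHn /fill.
by case: (ltngtP n.+1 k) => nk /=; lra.
Qed.

Lemma sum_update F Z y s v n : (1 <= s <= n)%N ->
  \sum_(1 <= t < n.+1) (F ([eta y with s |-> v] t) - F (Z t.-1)) =
  \sum_(1 <= t < n.+1) (F (y t) - F (Z t.-1)) + (F v - F (y s)).
Proof.
move=> s_in.
have s_iota : s \in index_iota 1 n.+1 by rewrite mem_index_iota ltnS.
rewrite !(bigD1_seq s) ?iota_uniq //= eqxx.
rewrite (eq_bigr (fun t => F (y t) - F (Z t.-1))) => [|t /negbTE ->] //.
lra.
Qed.

Lemma exists_piece Z z n : (1 <= n)%N -> Z 0%N <= z -> z <= Z n ->
  exists k, [/\ (1 <= k <= n)%N, Z k.-1 <= z & z <= Z k].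
Proof.
elim: n => [|[|n] IHn] // _ Z0z zZn; first by exists 1%N.
have [zZ|Zz] := lerP z (Z n.+1).
  by have [k [/andP[k_ge1 kn] ? ?]] := IHn isT Z0z zZ; exists k; rewrite k_ge1 leqW.
by exists n.+2; split; rewrite ?leqnn // ltW.
Qed.

End Profiles.

Section OrderedProfile.
Variables (R : realType) (N : nat) (Z y : nat -> R).
Hypothesis N_gt0 : (0 < N)%N.
Hypothesis Z_step : forall r, (r < N)%N -> Z r < Z r.+1.
Hypothesis y_box : forall t, (1 <= t <= N)%N -> Z t.-1 <= y t /\ y t <= Z t.
Hypothesis lower_pieces_full : forall r, (2 <= r <= N)%N -> Z r.-1 < y r ->
  forall s, (1 <= s <= r.-1)%N -> y s = Z s.

Lemma upper_pieces_empty r : (1 <= r <= N.-1)%N -> y r = Z r.-1 ->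
  forall s, (r.+1 <= s <= N)%N -> y s = Z s.-1.
Proof.
move=> /andP[r_ge1 rN] yr s /andP[rs sN].
have [lo _] := y_box (t := s) (ltac:(lia)).
apply/eqP; rewrite eq_le lo andbT leNgt; apply/negP => started.
have := lower_pieces_full (r := s) (ltac:(lia)) started (s := r) (ltac:(lia)).
by rewrite yr => /eqP; rewrite lt_eqF // (Z_lt Z_step) //; lia.
Qed.

Lemma ordered_profile_fill : exists k v, [/\ (1 <= k <= N)%N, Z k.-1 <= v, v <= Z k &
  forall t, (1 <= t <= N)%N -> y t = fill Z k v t].
Proof.
pose started t := (1 <= t <= N)%N && (Z t.-1 < y t).
have fill_at k : (1 <= k <= N)%N -> (forall t, (k < t)%N -> ~~ started t) ->
    ((1 < k)%N -> Z k.-1 < y k) ->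
    forall t, (1 <= t <= N)%N -> y t = fill Z k (y k) t.
  move=> k_in above below t t_in; rewrite /fill.
  case: ltngtP => [tk|kt|->] //; first by apply: (lower_pieces_full _ (below _)); lia.
  have [lo _] := y_box t_in; apply/eqP; rewrite eq_le lo andbT leNgt.
  by have := above t kt; rewrite /started t_in.
have [/hasP[t _ st_t] | /hasPn none] := boolP (has started (iota 0 N.+1)).
  have started_le t' : started t' -> (t' <= N)%N by case/andP=> /andP[].
  have [k /andP[k_in Zk] k_max] := ex_maxnP (ex_intro _ t st_t) started_le.
  have [lo hi] := y_box k_in; exists k, (y k); split => //.
  apply: fill_at => // t' kt'.
  by apply/negP => /k_max; rewrite leqNgt kt'.
have [lo hi] := y_box (t := 1) N_gt0; exists 1%N, (y 1%N); split => //.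
apply: fill_at => // t _.
case tN: (t <= N)%N; last by rewrite /started tN andbF.
by apply: none; rewrite mem_iota ltnS tN.
Qed.

End OrderedProfile.

Section Problem.
Variables (R : realType) (nw m N : nat) (gamma : 'cV[R]_nw -> R) (phi : R -> R).
Variables (Abar : 'cV[R]_m) (Bbar : 'M[R]_(m, nw)) (Cbar : 'cV[R]_m) (Z : nat -> R).
Hypothesis Z_step : forall r, (r < N)%N -> Z r < Z r.+1.
Implicit Types (y : nat -> R) (w : 'cV[R]_nw).

Lemma zsum_update y s v : (1 <= s <= N)%N ->
  zsum N Z [eta y with s |-> v] = zsum N Z y + (v - y s).
Proof.
move=> s_in; have /= E := sum_update (fun x : R => x) Z y v s_in.
by rewrite /zsum E addrA.
Qed.

Lemma obj1_update w y s v : (1 <= s <= N)%N ->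
  obj1 N gamma phi Z w [eta y with s |-> v] =
  obj1 N gamma phi Z w y + (phi v - phi (y s)).
Proof. by move=> s_in; rewrite /obj1 (sum_update phi) // addrA. Qed.

Lemma zsum_fill k v : (1 <= k <= N)%N -> zsum N Z (fill Z k v) = v.
Proof.
case/andP=> k_gt0 kN; have /= E := sum_fill (fun x : R => x) Z v N k_gt0.
by rewrite /zsum E ltnNge kN /=; lra.
Qed.

Lemma obj1_fill w k v : (1 <= k <= N)%N ->
  obj1 N gamma phi Z w (fill Z k v) = gamma w + phi v.
Proof.
case/andP=> k_gt0 kN; rewrite /obj1 sum_fill // ltnNge kN /=.
lra.
Qed.

Lemma feas1_fill w k v : (1 <= k <= N)%N -> Z k.-1 <= v -> v <= Z k ->
  lin_con Abar Bbar Cbar v w -> feas1 N Abar Bbar Cbar Z w (fill Z k v).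
Proof.
move=> k_in Zv vZ lin; split; last by rewrite zsum_fill.
move=> t t_in; rewrite /fill; case: ltngtP => [tk|kt|->] //.
- by rewrite lexx; split => //; apply: (Z_le Z_step); lia.
- by rewrite lexx; split => //; apply: (Z_le Z_step); lia.
Qed.

Lemma eq_zsum y y' : (forall t, (1 <= t <= N)%N -> y t = y' t) ->
  zsum N Z y = zsum N Z y'.
Proof. by move=> yy'; congr (_ + _); apply: eq_big_nat => t t_in; rewrite yy'. Qed.

Lemma eq_obj1 w y y' : (forall t, (1 <= t <= N)%N -> y t = y' t) ->
  obj1 N gamma phi Z w y = obj1 N gamma phi Z w y'.
Proof. by move=> yy'; congr (_ + _); apply: eq_big_nat => t t_in; rewrite yy'. Qed.

Section Optimizer.
Variables (wstar : 'cV[R]_nw) (ystar : nat -> R).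
Hypothesis ystar_feasible : feas1 N Abar Bbar Cbar Z wstar ystar.
Hypothesis ystar_optimal : forall w y, feas1 N Abar Bbar Cbar Z w y ->
  obj1 N gamma phi Z wstar ystar <= obj1 N gamma phi Z w y.

Lemma optimal_exchange s r d : (1 <= s <= N)%N -> (1 <= r <= N)%N -> s != r ->
  0 <= d -> ystar s + d <= Z s -> Z r.-1 <= ystar r - d ->
  phi (ystar r) - phi (ystar r - d) <= phi (ystar s + d) - phi (ystar s).
Proof.
move=> s_in r_in sr d_ge0 ysd yrd; have [box lin] := ystar_feasible.
pose y := [eta [eta ystar with r |-> ystar r - d] with s |-> ystar s + d].
have inner_s : [eta ystar with r |-> ystar r - d] s = ystar s.
  by rewrite /= (negbTE sr).
have zsum_y : zsum N Z y = zsum N Z ystar.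
  by rewrite zsum_update // inner_s zsum_update //=; lra.
have y_feasible : feas1 N Abar Bbar Cbar Z wstar y.
  split; last by rewrite zsum_y.
  move=> t t_in /=; case: eqP => [->|_]; first by have := box s s_in; lra.
  by case: eqP => [->|_]; [have := box r r_in; lra | exact: box].
have := ystar_optimal y_feasible.
by rewrite obj1_update // inner_s obj1_update //=; lra.
Qed.

Variables (h f g : nat -> R).
Hypothesis phi_convex : convex_on (Z 0%N) (Z N) phi.
Hypothesis phi_pieces : forall r z, (1 <= r <= N)%N -> Z r.-1 <= z -> z <= Z r ->
  phi z = 2^-1 * h r * z ^+ 2 + f r * z + g r.
Hypothesis pieces_distinct : forall r, (1 <= r <= N.-1)%N ->
  0 < h r \/ (f r, g r) <> (f r.+1, g r.+1).

Lemma optimal_lower_pieces_full r : (2 <= r <= N)%N -> Z r.-1 < ystar r ->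
  forall s, (1 <= s <= r.-1)%N -> ystar s = Z s.
Proof.
move=> r_in started s s_in; have [box _] := ystar_feasible.
have s_piece : (1 <= s <= N)%N by lia.
have r_piece : (1 <= r <= N)%N by lia.
have s_inner : (1 <= s < N)%N by lia.
have s_distinct : (1 <= s <= N.-1)%N by lia.
have sr : s != r by apply/negP => /eqP sr; lia.
have Zs_Zr : Z s <= Z r.-1 by apply: (Z_le Z_step); lia.
have Zr_ZN : Z r <= Z N by apply: (Z_le Z_step); lia.
have [lo_s hi_s] := box s s_piece; have [lo_r hi_r] := box r r_piece.
apply/eqP; rewrite eq_le hi_s leNgt /=; apply/negP => not_full.
pose d := Num.min (Z s - ystar s) (ystar r - Z r.-1).
have d_gt0 : 0 < d by rewrite lt_min !subr_gt0 not_full started.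
have [d_le_s d_le_r] : d <= Z s - ystar s /\ d <= ystar r - Z r.-1.
  by rewrite !ge_min !lexx orbT.
have ysd : ystar s + d <= Z s by lra.
have yrd : Z r.-1 <= ystar r - d by lra.
have exchange := optimal_exchange s_piece r_piece sr (ltW d_gt0) ysd yrd.
have slope_le : chord_slope phi (ystar r - d) (ystar r - d + d)
                <= chord_slope phi (ystar s) (ystar s + d).
  rewrite /chord_slope subrK (_ : ystar r - (ystar r - d) = d); last by lra.
  rewrite (_ : ystar s + d - ystar s = d); last by lra.
  by rewrite ler_pM2r ?invr_gt0.
have Zs_yd : Z s < ystar r - d + d by rewrite subrK (le_lt_trans Zs_Zr started).
have yd_ZN : ystar r - d + d <= Z N by rewrite subrK (le_trans hi_r Zr_ZN).
have [hs0 [_ fg]] := affine_across_breakpoint Z_step phi_convex phi_pieces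
  s_inner d_gt0 lo_s ysd (le_trans Zs_Zr yrd) Zs_yd yd_ZN slope_le.
by case: (pieces_distinct s_distinct) => [|/(_ fg)] //; rewrite hs0 ltxx.
Qed.

Hypothesis N_gt0 : (0 < N)%N.

Lemma optimal_solves_reduced :
  feas2 N Abar Bbar Cbar Z wstar (zsum N Z ystar) /\
  forall w z, feas2 N Abar Bbar Cbar Z w z ->
    gamma wstar + phi (zsum N Z ystar) <= gamma w + phi z.
Proof.
have [box lin] := ystar_feasible.
have [k [v [k_in Zv vZ ystar_fill]]] :=
  ordered_profile_fill N_gt0 box optimal_lower_pieces_full.
have zsum_ystar : zsum N Z ystar = v by rewrite (eq_zsum ystar_fill) zsum_fill.
split.
  split; [|split; last exact: lin]; rewrite zsum_ystar.
  - by apply: le_trans Zv; apply: (Z_le Z_step); lia.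
  - by apply: le_trans vZ _; apply: (Z_le Z_step); lia.
move=> w z [Z0z [zZN lin_z]].
have [k' [k'_in Zz zZ]] := exists_piece N_gt0 Z0z zZN.
have := ystar_optimal (feas1_fill k'_in Zz zZ lin_z).
by rewrite (eq_obj1 _ ystar_fill) !obj1_fill // zsum_ystar.
Qed.

End Optimizer.
End Problem.

Theorem theorem2 (R : realType) (nw m : nat) (gamma : 'cV[R]_nw -> R)
  (Abar : 'cV[R]_m) (Bbar : 'M[R]_(m, nw)) (Cbar : 'cV[R]_m)
  (N : nat) (Z : nat -> R) (phi : R -> R) (h f g : nat -> R)
  (wstar : 'cV[R]_nw) (ystar : nat -> R) :
  convex_fun gamma -> piecewise_quadratic gamma ->
  (1 <= N)%N ->
  (forall r, (r < N)%N -> Z r < Z r.+1) ->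
  convex_on (Z 0%N) (Z N) phi ->
  (forall r z, (1 <= r <= N)%N -> Z r.-1 <= z -> z <= Z r ->
     phi z = 2^-1 * h r * z ^+ 2 + f r * z + g r) ->
  (forall r, (1 <= r <= N.-1)%N -> 0 < h r \/ (f r, g r) <> (f r.+1, g r.+1)) ->
  feas1 N Abar Bbar Cbar Z wstar ystar ->
  (forall w y, feas1 N Abar Bbar Cbar Z w y ->
     obj1 N gamma phi Z wstar ystar <= obj1 N gamma phi Z w y) ->
  (forall r, (2 <= r <= N)%N -> Z r.-1 < ystar r ->
     forall s, (1 <= s <= r.-1)%N -> ystar s = Z s) /\
  (forall r, (1 <= r <= N.-1)%N -> ystar r = Z r.-1 ->
     forall s, (r.+1 <= s <= N)%N -> ystar s = Z s.-1) /\
  (feas2 N Abar Bbar Cbar Z wstar (zsum N Z ystar) /\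
   forall w z, feas2 N Abar Bbar Cbar Z w z ->
     gamma wstar + phi (zsum N Z ystar) <= gamma w + phi z).
Proof.
move=> _ _ N_gt0 Z_step phi_convex phi_pieces pieces_distinct feasible optimal.
have lower_full := optimal_lower_pieces_full Z_step feasible optimal
  phi_convex phi_pieces pieces_distinct.
split; first exact: lower_full.
split; first exact: upper_pieces_empty Z_step feasible.1 lower_full.
exact (optimal_solves_reduced Z_step feasible optimal phi_convex phi_pieces
  pieces_distinct N_gt0).
Qed.
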